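(* Let $M$ be a regular indecomposable representation of $(T(n),\Omega)$ which is a sink module with center $c$ and radius $r$. Then $d(M)-2\le d(\sigma M)\le d(M)$, and exactly one of the following holds: (1) $d(\sigma M)=d(M)-2$; this happens if and only if $\sigma M$ is a sink module, if and only if $M$ is complete; in this case the center of $\sigma M$ is $c$. (2) $d(\sigma M)=d(M)-1$; this happens if and only if $\sigma M$ is a flow module; in this case the center of $\sigma M$ is an edge $\{c,c'\}$ such that there is a path $(x_0,x_1,\dots,x_r)$ in $T(n)$ with $x_0=c$, $x_1=c'$ and $x_r$ a source of $\sigma\Omega$. (3) $d(\sigma M)=d(M)$; this happens if and only if $\sigma M$ is a source module; in this case the center of $\sigma M$ is $c$.
   Context: Let $k$ be a field and $n\ge 3$. $T(n)$ is the $n$-regular tree; fix a bipartite orientation $\Omega$ (every vertex a sink or a source), $\sigma\Omega$ the opposite orientation. A module is a finite-dimensional $k$-representation of $(T(n),\Omega)$ or $(T(n),\sigma\Omega)$. The shift functor $\sigma$ is the composition of the Bernstein–Gelfand–Ponomarev reflection functors at all sinks, sending representations of $(T(n),\Omega)$ to representations of $(T(n),\sigma\Omega)$ and vice versa. An indecomposable module $M$ is regular if $\sigma^tM\neq 0$ for all $t\in\mathbb Z$ ($\sigma^t$ for $t<0$ being powers of the left adjoint $\sigma^-$). A path of length $t$ is a sequence $(a_0,\dots,a_t)$ of vertices, consecutive ones neighbours, with $a_{i-1}\neq a_{i+1}$; a path of length $2r$ has center $a_r$, radius $r$; a path of length $2r+1$ has center the edge $\{a_r,a_{r+1}\}$,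 radius $r$. For indecomposable $M$, $T(M)$ is the full subgraph on vertices $a$ with $M_a\neq0$; a diameter path is a path in $T(M)$ of maximal length $d(M)$; all diameter paths share a center, the center of $M$; $r(M)=\lfloor d(M)/2\rfloor$. $M$ is a sink (resp. source) module if its diameter paths start and end at sinks (resp. sources) of the orientation of its quiver, and a flow module if $d(M)$ is odd. A sink module $M$ with center $p$ and radius $r$ is complete if $r\ge1$ and for every path $(x(0),x(1),\dots,x(r))$ in $T(n)$ with $x(r)=p$ and $x(1),\dots,x(r)$ vertices of $T(M)$, one has $\dim M_{x(0)}=\dim M_{x(1)}$. *)

From HB Require Import structures.
From mathcomp Require Import all_boot all_order all_algebra.
Set Implicit Arguments. Unset Strict Implicit. Unset Printing Implicit Defensive.
Import Order.TTheory GRing.Theory Num.Theory.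
Local Open Scope ring_scope.

(* The n-regular tree T(n): vertices are reduced words over 'I_n (no two    *)
(* consecutive letters equal), i.e. elements of the free product of n      *)
(* copies of Z/2; the i-th neighbour of a word s is s with letter i         *)
(* multiplied on the left.                                                  *)
Definition reduced (n : nat) (s : seq 'I_n) : bool :=
  sorted (fun a b : 'I_n => a != b) s.

Definition V (n : nat) := {s : seq 'I_n | reduced s}.

Definition nbr_seq (n : nat) (i : 'I_n) (s : seq 'I_n) : seq 'I_n :=
  if s is a :: s' then (if a == i then s' else i :: s) else [:: i].

Lemma nbr_reduced (n : nat) (i : 'I_n) (s : seq 'I_n) :
  reduced s -> reduced (nbr_seq i s).
Proof.
case: s => [|a s] //= Hs.
case: eqP => [_|/eqP Hai].
  by move: Hs; rewrite /reduced /=; apply: path_sorted.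
by rewrite /reduced /= eq_sym Hai.
Qed.

Definition vroot (n : nat) : V n := exist _ [::] isT.

Definition vnbr (n : nat) (x : V n) (i : 'I_n) : V n :=
  exist _ (nbr_seq i (val x)) (nbr_reduced i (valP x)).

Definition adj (n : nat) (x y : V n) : bool := [exists i : 'I_n, vnbr x i == y].

(* Bipartite orientations: the orientation [b] has as sinks exactly the     *)
(* vertices x with odd (size x) == b, all other vertices being sources.     *)
(* Omega corresponds to some b, and sigma Omega to ~~ b.                   *)
Definition sinkb (n : nat) (b : bool) (x : V n) : bool := odd (size (val x)) == b.

Definition arrow (n : nat) (b : bool) (x y : V n) : bool := adj x y && sinkb b y.

(* Representations: a vector space k^(rdim x) at each vertex, and for each  *)
(* ordered pair (x,y) a matrix acting on row vectors (v |-> v *m rmap x y); *)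
(* only the matrices on arrows of the orientation under consideration are  *)
(* relevant, the others are ignored by all definitions below.              *)
Record rep (K : fieldType) (n : nat) := Rep {
  rdim : V n -> nat;
  rmap : forall x y : V n, 'M[K]_(rdim x, rdim y) }.

Section Reps.
Variables (K : fieldType) (n : nat).

Definition fin_supp (M : rep K n) : Prop :=
  exists s : seq (V n), forall x, rdim M x != 0%N -> x \in s.

Definition nonzero_rep (M : rep K n) : Prop := exists x, rdim M x != 0%N.

(* subrepresentations of a representation of orientation b, given by a     *)
(* subspace (row space of a square matrix) at each vertex                   *)
Definition subrep (b : bool) (M : rep K n) (U : forall x, 'M[K]_(rdim M x)) : Prop :=
  forall x y, arrow b x y -> (U x *m rmap M x y <= U y)%MS.

Definition decomposable (b : bool) (M : rep K n) : Prop :=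
  exists (U W : forall x, 'M[K]_(rdim M x)),
    [/\ @subrep b M U, @subrep b M W,
        forall x, (U x :&: W x <= (0 : 'M[K]_(rdim M x)))%MS && (1%:M <= U x + W x)%MS,
        exists x, U x != 0 & exists x, W x != 0].

Definition indecomposable (b : bool) (M : rep K n) : Prop :=
  nonzero_rep M /\ ~ decomposable b M.

Definition mxresize (m1 n1 m2 n2 : nat) (A : 'M[K]_(m1, n1)) : 'M[K]_(m2, n2) :=
  \matrix_(i < m2, j < n2)
     match (insub (val i) : option 'I_m1), (insub (val j) : option 'I_n1) with
     | Some i0, Some j0 => A i0 j0
     | _, _ => 0
     end.

Definition inmx (M : rep K n) (x : V n) :
  'M[K]_(\sum_(i < n) rdim M (vnbr x i), rdim M x) :=
  \mxcol_(i < n) rmap M (vnbr x i) x.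

Definition outmx (M : rep K n) (x : V n) :
  'M[K]_(rdim M x, \sum_(i < n) rdim M (vnbr x i)) :=
  \mxrow_(i < n) rmap M x (vnbr x i).

Definition kerB (M : rep K n) (x : V n) := row_base (kermx (inmx M x)).

(* a map (+) M_u -> C (C of dimension = that of the cokernel of outmx),     *)
(* surjective with kernel the image of outmx: the cokernel projection       *)
Definition cokQ (M : rep K n) (x : V n) := (row_base (cokermx (outmx M x))^T)^T.

(* sigma: BGP reflection at all sinks of orientation b; the result is a     *)
(* representation of orientation ~~ b.                                      *)
Definition sigma (b : bool) (M : rep K n) : rep K n :=
  @Rep K n
    (fun x => if sinkb b x then \rank (kermx (inmx M x)) else rdim M x)
    (fun x y => if sinkb b x then
                  (if [pick i | vnbr x i == y] is Some i
                   then @mxresize _ _ _ _ (submxrow (kerB M x) i) else 0)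
                else 0).

(* sigma^- : BGP reflection at all sources of orientation b; the result is  *)
(* a representation of orientation ~~ b.                                    *)
Definition sigmam (b : bool) (M : rep K n) : rep K n :=
  @Rep K n
    (fun x => if ~~ sinkb b x then \rank ((cokermx (outmx M x))^T) else rdim M x)
    (fun y x => if ~~ sinkb b x then
                  (if [pick i | vnbr x i == y] is Some i
                   then @mxresize _ _ _ _ (submxcol (cokQ M x) i) else 0)
                else 0).

Fixpoint sigma_pow (k : nat) (b : bool) (M : rep K n) : rep K n :=
  if k is k'.+1 then sigma_pow k' (~~ b) (sigma b M) else M.

Fixpoint sigmam_pow (k : nat) (b : bool) (M : rep K n) : rep K n :=
  if k is k'.+1 then sigmam_pow k' (~~ b) (sigmam b M) else M.

Definition regular (b : bool) (M : rep K n) : Prop :=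
  forall k : nat, nonzero_rep (sigma_pow k b M) /\ nonzero_rep (sigmam_pow k b M).

(* vertices.                                                                *)
Definition tpath (p : seq (V n)) : bool :=
  [&& p != [::], path (@adj n) (head (vroot n) p) (behead p) &
      all (fun i => nth (vroot n) p i != nth (vroot n) p i.+2) (iota 0 (size p - 2))].

Definition supp_path (M : rep K n) (p : seq (V n)) : bool :=
  tpath p && all (fun v => rdim M v != 0%N) p.

Definition diam_path (M : rep K n) (p : seq (V n)) : Prop :=
  supp_path M p /\ forall q, supp_path M q -> (size q <= size p)%N.

Definition is_diam (M : rep K n) (d : nat) : Prop :=
  (exists p, supp_path M p /\ size p = d.+1)%N /\
  forall p, supp_path M p -> (size p <= d.+1)%N.

Definition pfirst (p : seq (V n)) := nth (vroot n) p 0.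
Definition plast (p : seq (V n)) := nth (vroot n) p (size p).-1.

Definition sink_module (b : bool) (M : rep K n) : Prop :=
  forall p, diam_path M p -> sinkb b (pfirst p) && sinkb b (plast p).
Definition source_module (b : bool) (M : rep K n) : Prop :=
  forall p, diam_path M p -> ~~ sinkb b (pfirst p) && ~~ sinkb b (plast p).
Definition flow_module (M : rep K n) : Prop :=
  exists d, is_diam M d /\ odd d.

Definition vcenter (M : rep K n) (c : V n) : Prop :=
  forall p, diam_path M p ->
    ~~ odd (size p).-1 /\ nth (vroot n) p ((size p).-1./2) = c.

Definition ecenter (M : rep K n) (c c' : V n) : Prop :=
  forall p, diam_path M p ->
    odd (size p).-1 /\
    let r := ((size p).-1)./2 in
    ((nth (vroot n) p r = c /\ nth (vroot n) p r.+1 = c') \/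
     (nth (vroot n) p r = c' /\ nth (vroot n) p r.+1 = c)).

Definition complete (M : rep K n) (c : V n) (r : nat) : Prop :=
  (1 <= r)%N /\
  forall p : seq (V n), tpath p -> size p = r.+1 -> nth (vroot n) p r = c ->
    (forall i, (1 <= i <= r)%N -> rdim M (nth (vroot n) p i) != 0%N) ->
    rdim M (nth (vroot n) p 0) = rdim M (nth (vroot n) p 1).

End Reps.

From HB Require Import structures.
From mathcomp Require Import all_boot all_order all_algebra.
From mathcomp Require Import zify.
From Stdlib Require Import Classical_Prop.
Set Implicit Arguments. Unset Strict Implicit. Unset Printing Implicit Defensive.

(* Root T(n) at the center c.  Indecomposability makes the support of M
   closed under moving towards c (otherwise the branch beyond a gap splits
   off), so T(M) lies in the ball of radius r about c and its leaves at
   distance r are sinks.  At a sink x the incoming maps are jointly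
   surjective, so dim (sigma M)_x is the sum of the neighbouring dimensions
   minus dim M_x: it vanishes beyond distance r, equals
   dim M_(parent z) - dim M_z at a leaf z, and is positive at a sink with two
   supported neighbours (else M would split along one of them).  Hence a path
   of T(M) with both ends in T(sigma M) lies in T(sigma M), and the diameter
   of sigma M is read off from the leaves z with dim M_z < dim M_(parent z):
   if there are none (M complete) it drops by 2, if two of them lie in
   different branches at c it stays d, and if they all lie in one branch
   {c, c'} it drops by 1. *)

Section Tree.
Variable n : nat.
Implicit Types (x y z v : V n) (s t u w : seq 'I_n).

Lemma nbr_seqK (i : 'I_n) s : reduced s -> nbr_seq i (nbr_seq i s) = s.
Proof.
case: s => [|a s] /=; first by rewrite eqxx.
case: eqP => [->|/eqP ai] Hs; last by rewrite /= eqxx.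
by case: s Hs => [|a' s] //= /andP[+ _]; rewrite eq_sym => /negbTE ->.
Qed.

Lemma reduced_foldr_nbr w s : reduced w -> reduced (foldr (@nbr_seq n) w s).
Proof. by move=> Hw; elim: s => [|a s IH] //=; apply: nbr_reduced. Qed.

Lemma foldr_nbr_seq w t (a : 'I_n) : reduced w -> reduced t ->
  foldr (@nbr_seq n) w (nbr_seq a t) = nbr_seq a (foldr (@nbr_seq n) w t).
Proof.
move=> Hw; case: t => [|a' t] //= Ht.
by case: eqP => [->|//]; rewrite nbr_seqK //; apply: reduced_foldr_nbr.
Qed.

Lemma foldr_nbrA w u s : reduced w -> reduced u ->
  foldr (@nbr_seq n) w (foldr (@nbr_seq n) u s) =
  foldr (@nbr_seq n) (foldr (@nbr_seq n) w u) s.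
Proof.
move=> Hw Hu; elim: s => [|a s IH] //=.
by rewrite foldr_nbr_seq // ?IH //; apply: reduced_foldr_nbr.
Qed.

Lemma foldr_nbr_revK s t : reduced t ->
  foldr (@nbr_seq n) (foldr (@nbr_seq n) t s) (rev s) = t.
Proof.
elim: s t => [|a s IH] t Ht //=.
by rewrite rev_cons foldr_rcons nbr_seqK ?IH //; apply: reduced_foldr_nbr.
Qed.

Lemma foldr_nbr_nil s : reduced s -> foldr (@nbr_seq n) [::] s = s.
Proof.
elim: s => [|a s IH] //= Hs.
have Hs' : reduced s by move: Hs; rewrite /reduced /=; apply: path_sorted.
rewrite IH //; case: s Hs {IH Hs'} => [|a' s] //= /andP[Ha _].
by rewrite eq_sym (negbTE Ha).
Qed.

(* Vertices are elements of the free product of [n] copies of Z/2, and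
   [relword z x] is the reduced word of [x z^-1]: the labels along the
   geodesic from [z] to [x], the letter next to [x] first. *)
Definition relword z x :=
  foldr (@nbr_seq n) (foldr (@nbr_seq n) [::] (rev (val z))) (val x).
Definition dist z x := size (relword z x).
Definition parent z x := if relword z x is a :: _ then vnbr x a else x.

Lemma reduced_inv z : reduced (foldr (@nbr_seq n) [::] (rev (val z))).
Proof. exact: reduced_foldr_nbr. Qed.

Lemma relword_nbr z x i : relword z (vnbr x i) = nbr_seq i (relword z x).
Proof.
by rewrite /relword /= foldr_nbr_seq //; [apply: reduced_inv | apply: valP].
Qed.

Lemma relword_root z : relword z z = [::].
Proof. by rewrite /relword -{2}(revK (val z)) foldr_nbr_revK. Qed.

Lemma relword_inj z : injective (relword z).
Proof.
have relwordK x : foldr (@nbr_seq n) (val z) (relword z x) = val x.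
  rewrite /relword !foldr_nbrA ?reduced_inv ?(valP z) //=.
  rewrite -{1}(foldr_nbr_nil (valP z)) foldr_nbr_revK //.
  exact: foldr_nbr_nil (valP x).
by move=> x y E; apply: val_inj; rewrite -(relwordK x) E relwordK.
Qed.

Lemma relword_eq_nil z x : (relword z x == [::]) = (x == z).
Proof.
apply/eqP/eqP => [E|->]; last exact: relword_root.
by apply: (@relword_inj z); rewrite E relword_root.
Qed.

Lemma dist_eq0 z x : (dist z x == 0)%N = (x == z).
Proof. by rewrite /dist size_eq0 relword_eq_nil. Qed.

Lemma dist_root z : dist z z = 0%N.
Proof. by apply/eqP; rewrite dist_eq0. Qed.

Lemma vnbrK x i : vnbr (vnbr x i) i = x.
Proof. by apply: val_inj => /=; rewrite nbr_seqK //; apply: valP. Qed.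

Lemma relword_vnbr x i : relword x (vnbr x i) = [:: i].
Proof. by rewrite relword_nbr relword_root. Qed.

Lemma dist_vnbr x i : dist x (vnbr x i) = 1%N.
Proof. by rewrite /dist relword_vnbr. Qed.

Lemma vnbr_neq x i : vnbr x i != x.
Proof. by rewrite -(relword_eq_nil x) relword_vnbr. Qed.

Lemma vnbr_inj x : injective (vnbr x).
Proof. by move=> i j E; have := relword_vnbr x i; rewrite E relword_vnbr => -[]. Qed.

Lemma adjP x y : reflect (exists i, vnbr x i = y) (adj x y).
Proof. by apply: (iffP existsP) => [[i /eqP]|[i /eqP]]; exists i. Qed.

Lemma adj_vnbr x i : adj x (vnbr x i).
Proof. by apply/adjP; exists i. Qed.

Lemma adj_sym x y : adj x y -> adj y x.
Proof. by case/adjP => i <-; apply/adjP; exists i; rewrite vnbrK. Qed.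

Lemma adj_neq x y : adj x y -> x != y.
Proof. by case/adjP => i <-; rewrite eq_sym vnbr_neq. Qed.

Lemma parent_root z : parent z z = z.
Proof. by rewrite /parent relword_root. Qed.

Lemma parent_vnbr x i : parent x (vnbr x i) = x.
Proof. by rewrite /parent relword_vnbr vnbrK. Qed.

Lemma adj_parent z x : x != z -> adj x (parent z x).
Proof.
by rewrite -relword_eq_nil /parent; case: (relword z x) => // a t _; apply: adj_vnbr.
Qed.

Lemma dist_parent z x : dist z (parent z x) = (dist z x).-1.
Proof.
rewrite /dist /parent; case E: (relword z x) => [|a t] /=.
  by rewrite E.
by rewrite relword_nbr E /= eqxx.
Qed.

Lemma adj_parentP z x y : adj x y ->
  (x != z /\ y = parent z x) \/ (y != z /\ x = parent z y).
Proof.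
case/adjP => i <-; rewrite -!relword_eq_nil /parent relword_nbr.
case: (relword z x) => [|a t] /=; first by right; rewrite vnbrK.
by have [<-|Hai] := eqVneq a i; [left | right; rewrite vnbrK].
Qed.

Lemma dist_parent_lt z x : x != z -> (dist z (parent z x)).+1 = dist z x.
Proof. by rewrite -dist_eq0 dist_parent; case: (dist z x). Qed.

Lemma adj_dist z x y : adj x y ->
  (x != z /\ y = parent z x /\ (dist z y).+1 = dist z x) \/
  (y != z /\ x = parent z y /\ (dist z x).+1 = dist z y).
Proof.
case/(adj_parentP z) => -[H E]; [left|right]; do 2 split => //;
  by rewrite E dist_parent_lt.
Qed.

Lemma sinkb_adj b x y : adj x y -> sinkb b y = ~~ sinkb b x.
Proof.
have odd_nbr (i : 'I_n) s : odd (size (nbr_seq i s)) = ~~ odd (size s).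
  by case: s => [|a s] //=; case: eqP => //=; rewrite negbK.
by case/adjP => i <-; rewrite /sinkb /= odd_nbr; case: (odd _); case: b.
Qed.

Lemma sinkb_neg b x : sinkb (~~ b) x = ~~ sinkb b x.
Proof. by rewrite /sinkb; case: (odd _); case: b. Qed.

Lemma sinkb_dist b z x : sinkb b x = odd (dist z x) (+) sinkb b z.
Proof.
move Hm: (dist z x) => m; elim: m x Hm => [|m IH] x Hx.
  by move/eqP: Hx; rewrite dist_eq0 => /eqP ->.
have Hxz : x != z by rewrite -dist_eq0 Hx.
rewrite (sinkb_adj b (adj_sym (adj_parent Hxz))) (IH (parent z x)).
  by rewrite /= addNb.
by rewrite dist_parent Hx.
Qed.

Lemma dist_iter_parent z k x : dist z (iter k (parent z) x) = (dist z x - k)%N.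
Proof. by elim: k => [|k IH] /=; rewrite ?subn0 // dist_parent IH subnS. Qed.

Lemma iter_parent_dist z x : iter (dist z x) (parent z) x = z.
Proof. by apply/eqP; rewrite -dist_eq0 dist_iter_parent subnn. Qed.

(* [v] lies on the geodesic from [z] to [x]: the branch at [v] away from [z]. *)
Definition in_branch z v x :=
  (dist z v <= dist z x)%N && (iter (dist z x - dist z v) (parent z) x == v).

Lemma in_branch_refl z v : in_branch z v v.
Proof. by rewrite /in_branch leqnn subnn /=. Qed.

Lemma in_branch_root z v : v != z -> in_branch z v z = false.
Proof. by rewrite -dist_eq0 /in_branch dist_root leqn0 => /negbTE ->. Qed.

Lemma in_branch_vnbr x i j : in_branch x (vnbr x j) (vnbr x i) = (i == j).
Proof.
rewrite /in_branch /dist !relword_vnbr leqnn subnn /=.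
by apply/eqP/eqP => [/vnbr_inj|->].
Qed.

Lemma in_branch_parent z v x : x != z ->
  in_branch z v x = (x == v) || in_branch z v (parent z x).
Proof.
move=> Hx; have Hh := dist_parent_lt Hx.
have [->|Hxv] := eqVneq x v; first by rewrite in_branch_refl.
rewrite /in_branch dist_parent; case: (ltngtP (dist z v) (dist z x)) => H.
- have -> : (dist z v <= (dist z x).-1)%N by lia.
  by rewrite (_ : dist z x - dist z v = ((dist z x).-1 - dist z v).+1)%N ?iterSr //; lia.
- by have -> : (dist z v <= (dist z x).-1)%N = false by lia.
- have -> : (dist z v <= (dist z x).-1)%N = false by lia.
  by rewrite H subnn /= (negbTE Hxv).
Qed.

(* Only the edge between [v] and its parent leaves the branch at [v]. *)
Lemma in_branch_adj z v x y : adj x y -> v != z ->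
  ~~ ((x == v) && (y == parent z v)) -> ~~ ((y == v) && (x == parent z v)) ->
  in_branch z v x = in_branch z v y.
Proof.
move=> Hxy Hv H1 H2; have [[Hx Ey]|[Hy Ex]] := adj_parentP z Hxy.
  rewrite Ey (in_branch_parent v Hx); have [E|//] := eqVneq x v.
  by move: H1; rewrite Ey E !eqxx.
rewrite Ex (in_branch_parent v Hy); have [E|//] := eqVneq y v.
by move: H2; rewrite Ex E !eqxx.
Qed.

End Tree.

Section Walks.
Variables (n : nat) (z : V n).
Implicit Types (x y v : V n) (f g : nat -> V n).

Local Notation dist := (dist z).
Local Notation parent := (parent z).

Definition walk f L :=
  (forall i, (i < L)%N -> adj (f i) (f i.+1)) /\
  (forall i, (i.+1 < L)%N -> f i != f i.+2).

Lemma tpath_walk (p : seq (V n)) : tpath p -> walk (nth (vroot n) p) (size p).-1.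
Proof.
case/and3P; case: p => [|a p] //= _ Hp /allP Ha; split.
  by move=> i Hi; move/(pathP (vroot n)): Hp => /(_ i Hi); case: i Hi.
by move=> i Hi; apply: (Ha i); rewrite mem_iota /=; lia.
Qed.

Lemma tpath_nth (p : seq (V n)) : p != [::] ->
  (forall i, (i.+1 < size p)%N -> adj (nth (vroot n) p i) (nth (vroot n) p i.+1)) ->
  (forall i, (i.+2 < size p)%N -> nth (vroot n) p i != nth (vroot n) p i.+2) ->
  tpath p.
Proof.
case: p => [|a p] //= _ H1 H2; apply/and3P; split => //.
  by apply/(pathP (vroot n)) => i Hi; apply: (H1 i).
by apply/allP => i; rewrite mem_iota => /andP[_ Hi]; apply: H2; move: Hi => /=; lia.
Qed.

Lemma walk_tpath f L : walk f L -> tpath (mkseq f L.+1).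
Proof.
case=> H1 H2; apply: tpath_nth => //; rewrite size_mkseq => i Hi;
  rewrite !nth_mkseq; try lia; [apply: H1|apply: H2]; lia.
Qed.

Lemma walk_le f L L' : (L' <= L)%N -> walk f L -> walk f L'.
Proof. by move=> HL [H1 H2]; split => i Hi; [apply: H1|apply: H2]; lia. Qed.

Lemma walk_rev f L : walk f L -> walk (fun i => f (L - i)%N) L.
Proof.
case=> H1 H2; split => i Hi.
  rewrite (_ : L - i = (L - i.+1).+1)%N; last lia.
  by apply: adj_sym; apply: H1; lia.
by rewrite (_ : L - i = (L - i.+2).+2)%N 1?eq_sym; [apply: H2 | ]; lia.
Qed.

Lemma dist_neq x y : dist x != dist y -> x != y.
Proof. by apply: contra => /eqP ->. Qed.

Lemma walk_iter_parent v m : dist v = m -> walk (fun i => iter i parent v) m.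
Proof.
move=> Hv; split => i Hi.
  by apply: adj_parent; rewrite -dist_eq0 dist_iter_parent; lia.
by apply: dist_neq; rewrite !dist_iter_parent; lia.
Qed.

(* Non-backtracking forces a path to descend towards [z] and then climb. *)
Lemma walk_descent f L : walk f L -> exists k, [/\ (k <= L)%N,
  (forall i, (i < k)%N -> f i != z /\ f i.+1 = parent (f i)) &
  (forall i, (k <= i < L)%N -> f i.+1 != z /\ f i = parent (f i.+1))].
Proof.
elim: L => [|L IH] HL; first by exists 0%N; split => // i; lia.
have [k [Hk Hd Hu]] := IH (walk_le (leqnSn L) HL).
case: HL => HA HB.
have [Hs|Hs] := adj_parentP z (HA L (ltnSn L)); last first.
  exists k; split => [|//|i Hi]; first lia.
  by have [->|Hi'] := eqVneq i L; [exact: Hs | apply: Hu; lia].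
have [Ek|Ek] := eqVneq k L.
  exists L.+1; split => // i Hi; last lia.
  by have [->|Hi'] := eqVneq i L; [exact: Hs | apply: Hd; lia].
have [_ H2] := Hu L.-1 ltac:(lia); rewrite (_ : L.-1.+1 = L) in H2; last lia.
by move: (HB L.-1 ltac:(lia)); rewrite (_ : L.-1.+2 = L.+1) ?H2 -?Hs.2 ?eqxx //; lia.
Qed.

Lemma walk_valley f L : walk f L -> exists k, [/\ (k <= L)%N,
  (forall i, (i <= k)%N -> dist (f i) + i = dist (f 0))%N,
  (forall i, (k <= i <= L)%N -> dist (f i) = dist (f k) + (i - k))%N,
  (forall i, (i <= k)%N -> f i = iter i parent (f 0)) &
  (forall j, (j <= L - k)%N -> f (L - j)%N = iter j parent (f L))].
Proof.
move=> Hf; have [k [HkL Hd Hu]] := walk_descent Hf.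
exists k; split => //.
- elim=> [|i IH] Hi; first by rewrite addn0.
  have [Hfi ->] := Hd i Hi; rewrite -IH; last lia.
  by rewrite addnS -(dist_parent_lt Hfi).
- move=> i /andP[]; elim: i => [|i IH] H1 H2; first by rewrite (_ : k = 0%N) //; lia.
  have [->|Hik] := eqVneq k i.+1; first by rewrite subnn addn0.
  have [Hfi E] := Hu i ltac:(lia).
  by rewrite -(dist_parent_lt Hfi) -E IH; lia.
- elim=> [|i IH] Hi //=; rewrite -IH; last lia.
  by case: (Hd i Hi).
- elim=> [|j IH] Hj; first by rewrite subn0.
  rewrite /= -IH; last lia.
  by have [_ ->] := Hu (L - j.+1)%N ltac:(lia); congr (parent (f _)); lia.
Qed.

Lemma walk_length_le f L : walk f L -> (L <= dist (f 0) + dist (f L))%N.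
Proof.
case/walk_valley => k [HkL E1 E2 _ _].
by have := E1 k (leqnn k); have := E2 L ltac:(lia); lia.
Qed.

Lemma walk_through_root f L : walk f L -> (dist (f 0) + dist (f L) <= L.+1)%N ->
  [/\ f (dist (f 0)) = z, (dist (f 0) + dist (f L) = L)%N,
      (forall i, (i <= dist (f 0))%N -> f i = iter i parent (f 0)) &
      (forall i, (i <= dist (f L))%N -> f (L - i)%N = iter i parent (f L))].
Proof.
case/walk_valley => k [HkL E1 E2 E3 E4] Hle.
have Ek := E1 k (leqnn k); have EL := E2 L ltac:(lia).
have Hk0 : dist (f k) = 0%N by lia.
have -> : dist (f 0) = k by lia.
split => [|||i Hi]; [by apply/eqP; rewrite -dist_eq0 Hk0 | lia | exact: E3 | ].
by apply: E4; lia.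
Qed.

Lemma walk_valley_at f L j : walk f L -> (j <= L)%N -> f j = z ->
  [/\ (forall i, (i <= j)%N -> dist (f i) + i = j)%N,
      (forall i, (j <= i <= L)%N -> dist (f i) + j = i)%N,
      (forall i, (i <= j)%N -> f i = iter i parent (f 0)) &
      (forall i, (i <= L - j)%N -> f (L - i)%N = iter i parent (f L))].
Proof.
move=> Hf HjL Hfj; have [k [HkL E1 E2 E3 E4]] := walk_valley Hf.
have Hj0 : dist (f j) = 0%N by rewrite Hfj dist_root.
have Hk : k = j.
  case: (ltngtP k j) => // H.
  - by have := E2 j ltac:(lia); rewrite Hj0; lia.
  - by have := E1 j ltac:(lia); have := E1 k (leqnn k); rewrite Hj0; lia.
subst k; split => // [i Hi|i Hi].
  by rewrite (E1 i Hi) -(E1 j (leqnn j)) Hj0.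
by rewrite E2 // Hj0; lia.
Qed.

Lemma geodesic_tpath v m : dist v = m -> (0 < m)%N ->
  let g := mkseq (fun i => iter (m - i) parent v) m.+1 in
  [/\ tpath g, size g = m.+1, nth (vroot n) g 0 = z,
      nth (vroot n) g 1 = iter m.-1 parent v & nth (vroot n) g m = v].
Proof.
move=> Hv Hm; split; rewrite ?size_mkseq ?nth_mkseq ?subn0 ?subn1 ?subnn //.
  exact/walk_tpath/(walk_rev (walk_iter_parent Hv)).
by rewrite -{1}Hv iter_parent_dist.
Qed.

(* The path from [u] down to [z] followed by the path from [z] up to [w]. *)
Definition join_path u w m1 m2 i :=
  if (i <= m1)%N then iter i parent u else iter (m1 + m2 - i) parent w.

Lemma walk_join u w m1 m2 : dist u = m1 -> dist w = m2 ->
  ((0 < m1)%N -> (0 < m2)%N -> iter m1.-1 parent u != iter m2.-1 parent w) ->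
  walk (join_path u w m1 m2) (m1 + m2).
Proof.
move=> Hu Hw Hne; set f := join_path u w m1 m2.
have Hh i : (i <= m1 + m2)%N -> dist (f i) = (if (i <= m1)%N then m1 - i else i - m1)%N.
  by rewrite /f /join_path; case: ifP => H; rewrite dist_iter_parent; lia.
split => i Hi.
  have [H|H] := ltnP i m1.
    rewrite /f /join_path; have -> : (i <= m1)%N by lia.
    have -> : (i.+1 <= m1)%N by lia.
    by apply: (proj1 (walk_iter_parent Hu)).
  have Hc : f i.+1 != z by rewrite -dist_eq0 Hh; try lia; case: ifP; lia.
  suff -> : f i = parent (f i.+1) by apply: adj_sym; apply: adj_parent.
  rewrite /f /join_path (_ : (i.+1 <= m1)%N = false); last lia.
  rewrite -iterS (_ : (m1 + m2 - i.+1).+1 = m1 + m2 - i)%N; last lia.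
  case: ifP => H' //; rewrite (_ : i = m1); last lia.
  by rewrite -{1}Hu iter_parent_dist (_ : m1 + m2 - m1 = dist w)%N ?iter_parent_dist //; lia.
have [H|H] := eqVneq i.+1 m1.
  rewrite /f /join_path; have -> : (i <= m1)%N by lia.
  have -> : (i.+2 <= m1)%N = false by lia.
  have -> : i = m1.-1 by lia.
  by rewrite (_ : m1 + m2 - m1.-1.+2 = m2.-1)%N; [apply: Hne | ]; lia.
apply: dist_neq; rewrite !Hh; try lia.
by case: ifP; case: ifP; lia.
Qed.

End Walks.

Section Diameter.
Variables (K : fieldType) (n : nat) (N : rep K n).

Lemma supp_path_nth q i : supp_path N q -> (i <= (size q).-1)%N ->
  rdim N (nth (vroot n) q i) != 0%N.
Proof.
case/andP => Ht /allP Ha Hi; apply: Ha; apply: mem_nth.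
by case: q Ht Hi => //= a q _; lia.
Qed.

Lemma supp_path_walk q : supp_path N q -> walk (nth (vroot n) q) (size q).-1.
Proof. by case/andP => Ht _; apply: tpath_walk. Qed.

Lemma walk_supp_path f L : walk f L ->
  (forall i, (i <= L)%N -> rdim N (f i) != 0%N) -> supp_path N (mkseq f L.+1).
Proof.
move=> Hf HS; apply/andP; split; first exact: walk_tpath.
by apply/allP => x /mapP [i Hi ->]; rewrite mem_iota in Hi; apply: HS; lia.
Qed.

Lemma is_diam_uniq e e' : is_diam N e -> is_diam N e' -> e = e'.
Proof.
move=> [[q [Hq Hs]] H] [[q' [Hq' Hs']] H'].
by have := H _ Hq'; have := H' _ Hq; lia.
Qed.

Lemma diam_path_size e q : is_diam N e -> diam_path N q -> size q = e.+1.
Proof.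
move=> [[q0 [Hq0 Hs0]] H] [Hq Hmax].
by have := H _ Hq; have := Hmax _ Hq0; lia.
Qed.

Lemma diam_pathP e q : is_diam N e -> supp_path N q -> size q = e.+1 -> diam_path N q.
Proof. by move=> [_ H] Hq Hs; split => // q' /H; rewrite Hs. Qed.

Lemma flow_moduleE e : is_diam N e -> flow_module N <-> odd e.
Proof.
move=> He; split; last by exists e.
by case=> e' [He' Ho]; rewrite (is_diam_uniq He He').
Qed.

End Diameter.

Section Reflection.
Variables (K : fieldType) (n : nat).
Local Open Scope ring_scope.
Implicit Types (M : rep K n) (x y z v : V n).

Lemma mxresize_id m1 n1 (A : 'M[K]_(m1, n1)) : mxresize m1 n1 A = A.
Proof. by apply/matrixP => i j; rewrite mxE !valK. Qed.

Lemma mulmx_sub_dim0 (m p q : nat) (A : 'M[K]_(m, p)) (B : 'M[K]_(p, q)) (C : 'M[K]_q) :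
  (p == 0)%N || (q == 0)%N -> (A *m B <= C)%MS.
Proof.
case/orP => /eqP E; subst; first by rewrite (flatmx0 B) mulmx0 sub0mx.
by rewrite (thinmx0 (A *m B)) sub0mx.
Qed.

Lemma mx1_neq0 m : m != 0%N -> (1%:M : 'M[K]_m) != 0.
Proof. by rewrite -mxrank_eq0 mxrank1. Qed.

Lemma arrow_from_sink b x y : sinkb b x -> ~~ arrow b x y.
Proof. by move=> Hx; apply/andP => -[/(sinkb_adj b) ->]; rewrite Hx. Qed.

Lemma rdim_sigma_source b M v : ~~ sinkb b v -> rdim (sigma b M) v = rdim M v.
Proof. by move=> H; rewrite /= (negbTE H). Qed.

Lemma rdim_sigma_sink b M v : sinkb b v ->
  rdim (sigma b M) v = (\sum_(i < n) rdim M (vnbr v i) - \rank (inmx M v))%N.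
Proof. by move=> H; rewrite /= H mxrank_ker. Qed.

Lemma rdim_sigma_sink_le b M v : sinkb b v ->
  (rdim (sigma b M) v <= \sum_(i < n) rdim M (vnbr v i))%N.
Proof. by move=> H; rewrite rdim_sigma_sink // leq_subr. Qed.

Lemma rmap_sub_inmx M x i : (rmap M (vnbr x i) x <= inmx M x)%MS.
Proof.
rewrite -[X in (X <= _)%MS](mxcolK (fun j => rmap M (vnbr x j) x) i).
exact: rowsub_sub.
Qed.

Lemma mxcol_full_direct (p : 'I_n -> nat) k (B : forall i, 'M[K]_(p i, k)) i1 :
  (\sum_i p i = k)%N -> \rank (\mxcol_i B i) = k ->
  (<<B i1>> :&: \sum_(i | i != i1) <<B i>> <= (0 : 'M_k))%MS &&
  (1%:M <= <<B i1>> + \sum_(i | i != i1) <<B i>>)%MS.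
Proof.
move=> Hsum Hrk; set U := <<B i1>>%MS; set W := (\sum_(i | i != i1) <<B i>>)%MS.
have Hfull : \rank (U + W)%MS = k.
  apply/eqP; rewrite eqn_leq rank_leq_col -{1}Hrk mxrankS //=.
  rewrite -[\mxcol_i _]mul1mx -(submxrowK (1%:M : 'M[K]_(\sum_i p i))) mul_mxrow_mxcol.
  apply: summx_sub => j _; apply: submx_trans (submxMl _ _) _.
  have [->|Hj] := eqVneq j i1.
    by apply: submx_trans (addsmxSl _ _); rewrite genmxE.
  apply: submx_trans (addsmxSr _ _); apply: (sumsmx_sup j) => //; by rewrite genmxE.
apply/andP; split; last by apply: submx_full; rewrite /row_full Hfull.
have HU : (\rank U <= p i1)%N by rewrite /U mxrank_gen rank_leq_row.
have HW : (\rank W <= \sum_(i | i != i1) p i)%N.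
  have HW0 := (mxrank_sum_leqif _).1 : (\rank W <= _)%N.
  apply: leq_trans HW0 _; apply: leq_sum => i _.
  by apply: leq_trans (rank_leq_row (B i)); rewrite /= mxrank_gen.
rewrite -(mxrank_adds_leqif U W).2; apply/eqP/anti_leq.
rewrite (mxrank_adds_leqif U W).1 /= Hfull.
by apply: (leq_trans _ (eq_leq Hsum)); rewrite (bigD1 i1) //= leq_add.
Qed.

Section Decomposition.
Variables (b : bool) (M : rep K n).

(* The splitting pattern behind all indecomposability arguments below: a
   complement pair at one vertex [x], and a 2-colouring [P] of the other
   vertices that is constant along supported edges avoiding [x]. *)
Lemma decomposable_at x (U0 W0 : 'M[K]_(rdim M x)) (P : pred (V n)) :
  sinkb b x || (rdim M x == 0)%N ->
  (U0 :&: W0 <= (0 : 'M_(rdim M x)))%MS -> (1%:M <= U0 + W0)%MS ->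
  (forall i, (rmap M (vnbr x i) x <= if P (vnbr x i) then U0 else W0)%MS) ->
  (forall a y, adj a y -> a != x -> y != x ->
     rdim M a != 0%N -> rdim M y != 0%N -> P a = P y) ->
  (exists u, if u == x then U0 != 0 else P u && (rdim M u != 0%N)) ->
  (exists w, if w == x then W0 != 0 else ~~ P w && (rdim M w != 0%N)) ->
  decomposable b M.
Proof.
move=> Hx Hcap Hadd Hin Hedge [u Hu] [w Hw].
have subrep_if (S0 : 'M[K]_(rdim M x)) (Q : pred (V n)) :
    (forall i, Q (vnbr x i) -> rmap M (vnbr x i) x <= S0)%MS ->
    (forall a y, adj a y -> a != x -> y != x ->
       rdim M a != 0%N -> rdim M y != 0%N -> Q a = Q y) ->
    @subrep K n b M (fun y => if y == x then mxresize _ _ S0 else if Q y then 1%:M else 0).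
  move=> HQin HQ a y Hay; have Hadj := (andP Hay).1.
  have [Eax|Hax] := eqVneq a x.
    rewrite Eax; apply: mulmx_sub_dim0; case/orP: Hx => [Hs|->] //.
    by move: Hay; rewrite Eax (negbTE (arrow_from_sink _ Hs)).
  have [Eyx|Hyx] := eqVneq y x.
    move: Hadj; rewrite Eyx mxresize_id => /adj_sym/adjP[i <-].
    by case: ifP => HQ'; [rewrite mul1mx; apply: HQin | rewrite mul0mx sub0mx].
  have [E|] := boolP ((rdim M a == 0)%N || (rdim M y == 0)%N).
    exact: mulmx_sub_dim0.
  rewrite negb_or => /andP[Ha Hy]; rewrite (HQ a y) //.
  by case: (Q y); [rewrite submx1 | rewrite mul0mx sub0mx].
exists (fun y => if y == x then mxresize _ _ U0 else if P y then 1%:M else 0),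
       (fun y => if y == x then mxresize _ _ W0 else if ~~ P y then 1%:M else 0).
split.
- apply: subrep_if => // i HP; by have := Hin i; rewrite HP.
- apply: subrep_if => [i HP|a y Hay Ha Hy Sa Sy]; last by rewrite (Hedge a y).
  by have := Hin i; rewrite (negbTE HP).
- move=> y; have [->|_] := eqVneq y x; first by rewrite !mxresize_id Hcap.
  by case: (P y); rewrite /= ?capmx0 ?cap0mx sub0mx ?addsmxSl ?addsmxSr.
- exists u; move: Hu; case: eqP => [->|_]; first by rewrite mxresize_id.
  by case/andP=> -> /mx1_neq0.
- exists w; move: Hw; case: eqP => [->|_]; first by rewrite mxresize_id.
  by case/andP=> -> /mx1_neq0.
Qed.

Hypothesis Hind : indecomposable b M.

(* Cutting the edge from [v] to its parent would split off the branch at [v]. *)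
Lemma supp_parent z v : rdim M z != 0%N -> rdim M v != 0%N -> v != z ->
  rdim M (parent z v) != 0%N.
Proof.
move=> Hz Hv Hvz; apply/negP => /eqP Hw; case: Hind => _; apply.
set x := parent z v.
have thin m (A : 'M[K]_(m, rdim M x)) (B : 'M[K]_(rdim M x)) : (A <= B)%MS.
  by apply: submx_full; rewrite /row_full eqn_leq rank_leq_col (leq_trans (eq_leq Hw)).
have Hxv : v != x by rewrite eq_sym adj_neq // adj_sym // adj_parent.
have Hxz : z != x by apply: contra_neq Hz => ->; rewrite Hw.
apply: (@decomposable_at x 0 0 (in_branch z v)); rewrite ?thin //.
- by rewrite Hw orbT.
- move=> a y Hay Hax Hyx _ _; apply: in_branch_adj => //;
    by rewrite -/x ?(negbTE Hax) ?(negbTE Hyx) andbF.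
- by exists v; rewrite (negbTE Hxv) in_branch_refl.
- by exists z; rewrite (negbTE Hxz) in_branch_root.
Qed.

Hypothesis Hnz : nonzero_rep (sigma b M).

(* If the maps into [x] were not jointly surjective, a complement of their
   image would split off, unless M is concentrated at [x], where sigma M
   vanishes. *)
Lemma rank_inmx_sink x : sinkb b x -> \rank (inmx M x) = rdim M x.
Proof.
move=> Hx; apply/eqP; rewrite eqn_leq rank_leq_col /= leqNgt; apply/negP => Hlt.
have [[y Hyx Hy]|Hall] : (exists2 y, y != x & rdim M y != 0%N) \/
    (forall y, y != x -> rdim M y = 0%N).
  case: (classic (exists2 y, y != x & rdim M y != 0%N)) => H; [by left|right].
  by move=> y Hyx; apply/eqP/negPn/negP => H'; apply: H; exists y.
- case: Hind => _; apply; set A := <<inmx M x>>%MS.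
  apply: (@decomposable_at x A^C%MS A pred0); rewrite ?Hx //.
  + by rewrite capmxC capmx_compl.
  + by rewrite addsmxC; apply: submx_full (addsmx_compl_full A).
  + by move=> i; rewrite genmxE rmap_sub_inmx.
  + by exists x; rewrite eqxx -mxrank_eq0 mxrank_compl mxrank_gen subn_eq0 -ltnNge.
  + by exists y; rewrite (negbTE Hyx).
- case: Hnz => v; apply/negP; rewrite negbK.
  case Hv: (sinkb b v).
    rewrite -leqn0; apply: leq_trans (rdim_sigma_sink_le M Hv) _.
    rewrite leqn0 big1 // => i _; apply/eqP; rewrite Hall //.
    by apply: contraTneq Hv => E; rewrite -(vnbrK v i) E (sinkb_adj b (adj_vnbr x i)) Hx.
  by rewrite rdim_sigma_source ?Hv // Hall //; apply: contraFneq Hv => ->.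
Qed.

Lemma rdim_sigma_sink_eq x : sinkb b x ->
  rdim (sigma b M) x = (\sum_(i < n) rdim M (vnbr x i) - rdim M x)%N.
Proof. by move=> Hx; rewrite rdim_sigma_sink // rank_inmx_sink. Qed.

(* If sigma M vanished at [x], the images of two supported neighbours would
   be direct summands of M_x, splitting M along the branch of one of them. *)
Lemma sigma_sink_supp x i1 i2 : sinkb b x -> i1 != i2 ->
  rdim M (vnbr x i1) != 0%N -> rdim M (vnbr x i2) != 0%N ->
  rdim (sigma b M) x != 0%N.
Proof.
move=> Hx H12 H1 H2; apply/negP => /eqP H0; case: Hind => _; apply.
have Hrk := rank_inmx_sink Hx; rewrite rdim_sigma_sink // Hrk in H0.
have Hsum : (\sum_(i < n) rdim M (vnbr x i) = rdim M x)%N.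
  by apply/eqP; rewrite eqn_leq -subn_eq0 H0 -{1}Hrk rank_leq_row.
have /andP[Hcap Hadd] := @mxcol_full_direct _ _ (fun i => rmap M (vnbr x i) x) i1 Hsum Hrk.
apply: (@decomposable_at x _ _ (in_branch x (vnbr x i1)) _ Hcap Hadd); rewrite ?Hx //.
- move=> i; rewrite in_branch_vnbr; have [->|Hi] := eqVneq i i1; first by rewrite genmxE.
  by apply: (sumsmx_sup i) => //; rewrite genmxE.
- move=> a y Hay Ha Hy _ _; apply: in_branch_adj; rewrite ?vnbr_neq ?parent_vnbr //;
    by rewrite ?(negbTE Ha) ?(negbTE Hy) andbF.
- by exists (vnbr x i1); rewrite (negbTE (vnbr_neq x i1)) in_branch_refl.
- exists (vnbr x i2); rewrite (negbTE (vnbr_neq x i2)) in_branch_vnbr.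
  by rewrite eq_sym H12.
Qed.

End Decomposition.
End Reflection.

Section SinkModule.
Variables (K : fieldType) (n : nat) (b : bool) (M : rep K n) (c : V n) (d r : nat).
Hypotheses (Hind : indecomposable b M) (Hnz : nonzero_rep (sigma b M)).
Hypotheses (Hdiam : is_diam M d) (Hsink : sink_module b M).
Variable p : seq (V n).
Hypotheses (Hp : supp_path M p) (Hps : size p = d.+1) (Hd : d = r.*2).
Hypothesis (Hpc : nth (vroot n) p r = c).

Local Notation dist := (dist c).
Local Notation parent := (parent c).
Local Notation vr := (vroot n).
Local Notation spine := (nth vr p).
Local Notation suppM v := (rdim M v != 0%N).
Local Notation suppSM v := (rdim (sigma b M) v != 0%N).

Lemma spine_walk : walk spine d.
Proof. by have := supp_path_walk Hp; rewrite Hps. Qed.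

Lemma spine_supp i : (i <= d)%N -> suppM (spine i).
Proof. by move=> Hi; apply: supp_path_nth Hp _; rewrite Hps. Qed.

Lemma spine_ends : [/\ dist (spine 0) = r, dist (spine d) = r,
  forall i, (i <= r)%N -> spine i = iter i parent (spine 0) &
  forall i, (i <= r)%N -> spine (d - i)%N = iter i parent (spine d)].
Proof.
have [|E1 E2 E3 E4] := walk_valley_at spine_walk (_ : r <= d)%N Hpc; first lia.
split => [||//|i Hi]; first by have := E1 0%N (leq0n r); rewrite addn0.
  by have := E2 d ltac:(lia); lia.
by apply: E4; lia.
Qed.

Lemma sinkb_distE v : sinkb b v = (odd (dist v) == odd r).
Proof.
have [E0 _ _ _] := spine_ends.
have /andP[+ _] := Hsink (diam_pathP Hdiam Hp Hps).
rewrite /pfirst (sinkb_dist b c v) (sinkb_dist b c (spine 0)) E0.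
by case: (odd r); case: (odd (dist v)); case: (sinkb b c).
Qed.

Lemma sinkb_leaf z : dist z = r -> sinkb b z.
Proof. by move=> H; rewrite sinkb_distE H eqxx. Qed.

Lemma suppM_c : suppM c.
Proof. by rewrite -Hpc spine_supp //; lia. Qed.

Lemma suppM_parent v : suppM v -> suppM (parent v).
Proof.
move=> Hv; have [->|Hvc] := eqVneq v c; first by rewrite parent_root suppM_c.
exact (supp_parent Hind suppM_c Hv Hvc).
Qed.

Lemma suppM_iter k v : suppM v -> suppM (iter k parent v).
Proof. by move=> Hv; elim: k => //= k IH; apply: suppM_parent. Qed.

(* The two ends of the spine are leaves whose branches at [c] differ. *)
Lemma leaf_avoiding a : exists u,
  [/\ dist u = r, suppM u & (0 < r)%N -> iter r.-1 parent u != a].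
Proof.
have [E0 Ed E3 E4] := spine_ends.
have Hne : (0 < r)%N -> spine r.-1 != spine r.+1.
  by move=> Hr; have := (proj2 spine_walk) r.-1 ltac:(lia); rewrite (_ : r.-1.+2 = r.+1) //; lia.
have [Ha|Ha] := eqVneq (spine r.-1) a.
  exists (spine d); split => [||Hr]; [by [] | exact: spine_supp | ].
  by rewrite -E4 1?(_ : d - r.-1 = r.+1)%N -?Ha 1?eq_sym ?Hne //; lia.
exists (spine 0); split => [||Hr]; [by [] | exact: spine_supp | ].
by rewrite -E3 //; lia.
Qed.

(* A supported vertex beyond distance [r] would extend a half of the spine
   beyond length [d]. *)
Lemma suppM_dist v : suppM v -> (dist v <= r)%N.
Proof.
move=> Hv; rewrite leqNgt; apply/negP => Hlt.
have [u [Hu HuS Hua]] := leaf_avoiding (iter (dist v).-1 parent v).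
have Hw := walk_join Hu (erefl (dist v)) (fun Hr _ => Hua Hr).
have Hsp : supp_path M (mkseq (join_path c u v r (dist v)) (r + dist v).+1).
  apply: walk_supp_path Hw _ => i _.
  by rewrite /join_path; case: ifP => _; apply: suppM_iter.
by have := (proj2 Hdiam) _ Hsp; rewrite size_mkseq Hd; lia.
Qed.

Lemma suppSM_source v : suppSM v -> ~~ sinkb b v -> suppM v.
Proof. by move=> H Hs; rewrite -(rdim_sigma_source M Hs). Qed.

Lemma source_suppSM v : suppM v -> ~~ sinkb b v -> suppSM v.
Proof. by move=> H Hs; rewrite (rdim_sigma_source M Hs). Qed.

Lemma sigma_dist_gt v : (r < dist v)%N -> rdim (sigma b M) v = 0%N.
Proof.
have notM u : (r < dist u)%N -> rdim M u = 0%N.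
  by move=> H; apply/eqP; apply: contraTT H => /suppM_dist; rewrite -leqNgt.
move=> H; case Hs: (sinkb b v); last by rewrite rdim_sigma_source ?Hs // notM.
have H2 : (r.+1 < dist v)%N.
  rewrite ltn_neqAle H andbT; apply/eqP => E; move: Hs.
  by rewrite sinkb_distE -E /=; case: (odd r).
apply/eqP; rewrite -leqn0; apply: leq_trans (rdim_sigma_sink_le M Hs) _.
rewrite leqn0; apply/eqP; apply: big1 => i _; apply: notM.
by have := adj_dist c (adj_vnbr v i); lia.
Qed.

Lemma suppSM_dist v : suppSM v -> (dist v <= r)%N.
Proof. by move=> H; rewrite leqNgt; apply: contra H => /sigma_dist_gt ->. Qed.

Lemma r_gt0 : (0 < r)%N.
Proof.
rewrite lt0n; apply/eqP => Hr0; case: Hnz => v; apply/negP; rewrite negbK.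
have [->|Hvc] := eqVneq v c; last by apply/eqP; apply: sigma_dist_gt; rewrite Hr0 lt0n dist_eq0.
have Hs : sinkb b c by apply: sinkb_leaf; rewrite dist_root.
rewrite -leqn0; apply: leq_trans (rdim_sigma_sink_le M Hs) _.
rewrite leqn0 big1 // => i _; apply/eqP/negbNE/negP => /suppM_dist.
by rewrite dist_vnbr Hr0.
Qed.

Lemma sourceb_pred v : dist v = r.-1 -> ~~ sinkb b v.
Proof.
move=> H; rewrite sinkb_distE H; have := r_gt0.
by case: r => // r' _ /=; case: (odd r').
Qed.

Lemma sum_rdim_leaf_nbr v : dist v = r ->
  (\sum_(i < n) rdim M (vnbr v i) = rdim M (parent v))%N.
Proof.
move=> Hv; have Hvc : v != c by rewrite -dist_eq0 Hv -lt0n r_gt0.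
have /adjP [i0 Ei0] := adj_parent Hvc.
rewrite (bigD1 i0) //= Ei0 big1 ?addn0 // => i Hi.
have Hne : vnbr v i != parent v.
  by rewrite -Ei0; apply: contra_neq Hi => /vnbr_inj.
apply/eqP/negbNE/negP => /suppM_dist.
by case: (adj_dist c (adj_vnbr v i)) => [[_ [E _]]|[_ [_ E]]]; [move: Hne; rewrite E eqxx | lia].
Qed.

Lemma rdim_sigma_leaf z : dist z = r ->
  rdim (sigma b M) z = (rdim M (parent z) - rdim M z)%N.
Proof.
by move=> Hz; rewrite rdim_sigma_sink_eq ?sinkb_leaf // sum_rdim_leaf_nbr.
Qed.

Lemma rdim_leaf_le z : dist z = r -> (rdim M z <= rdim M (parent z))%N.
Proof.
move=> Hz; rewrite -(rank_inmx_sink Hind Hnz (sinkb_leaf Hz)).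
by rewrite -(sum_rdim_leaf_nbr Hz) rank_leq_row.
Qed.

Lemma leaf_suppM_parent z : dist z = r -> suppSM z -> suppM (parent z).
Proof. by move=> Hz; rewrite rdim_sigma_leaf //; apply: contraNneq => ->. Qed.

Lemma suppSM_walk f L : walk f L -> (forall i, (0 < i < L)%N -> suppM (f i)) ->
  suppSM (f 0) -> suppSM (f L) -> forall i, (i <= L)%N -> suppSM (f i).
Proof.
move=> [Hadj Hnb] HS H0 HL i Hi.
have [->|Hi0] := posnP i; first by [].
have [->|HiL] := eqVneq i L; first by [].
have HiS : suppM (f i) by apply: HS; lia.
case Hsk: (sinkb b (f i)); last by apply: source_suppSM; rewrite ?Hsk.
have A1 : adj (f i) (f i.-1).
  by apply: adj_sym; have := Hadj i.-1 ltac:(lia); rewrite prednK.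
have A2 : adj (f i) (f i.+1) by apply: Hadj; lia.
have S1 : suppM (f i.-1).
  have [E1|E1] := posnP i.-1; last by apply: HS; lia.
  by rewrite E1; apply: suppSM_source H0 _; rewrite -E1 (sinkb_adj b A1) Hsk.
have S2 : suppM (f i.+1).
  have [E2|E2] := eqVneq i.+1 L; last by apply: HS; lia.
  by rewrite E2; apply: suppSM_source HL _; rewrite -E2 (sinkb_adj b A2) Hsk.
have Hne : f i.-1 != f i.+1 by have := Hnb i.-1 ltac:(lia); rewrite prednK.
case/adjP: A1 S1 Hne => i1 <- S1; case/adjP: A2 S2 => i2 <- S2 Hne.
by apply: (sigma_sink_supp Hind Hnz Hsk _ S1 S2); apply: contra_neq Hne => ->.
Qed.

Lemma suppSM_join u w m1 m2 : dist u = m1 -> dist w = m2 ->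
  ((0 < m1)%N -> (0 < m2)%N -> iter m1.-1 parent u != iter m2.-1 parent w) ->
  ((0 < m1)%N -> suppM (parent u)) -> ((0 < m2)%N -> suppM (parent w)) ->
  suppSM u -> suppSM w -> supp_path (sigma b M) (mkseq (join_path c u w m1 m2) (m1 + m2).+1).
Proof.
move=> Hu Hw Hne Hpu Hpw Su Sw; have Hf := walk_join Hu Hw Hne.
apply: (walk_supp_path Hf); apply: (suppSM_walk Hf).
- move=> i Hi; rewrite /join_path; case: ifP => H.
    by rewrite -(prednK (_ : 0 < i)%N) ?iterSr; [apply/suppM_iter/Hpu | ]; lia.
  by rewrite -(prednK (_ : 0 < m1 + m2 - i)%N) ?iterSr; [apply/suppM_iter/Hpw | ]; lia.
- by rewrite /join_path leq0n.
- rewrite /join_path; case: ifP => H; last by rewrite subnn.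
  have Ew : w = c by apply/eqP; rewrite -dist_eq0; lia.
  have -> : (m1 + m2 = dist u)%N by lia.
  by rewrite iter_parent_dist -{1}Ew.
Qed.

Lemma complete_leavesE :
  complete M c r <-> (forall z, dist z = r -> rdim (sigma b M) z = 0%N).
Proof.
split => [[_ Hc] z Hz|Hleaf].
  apply/eqP/negP => Hs.
  have Hf := walk_iter_parent Hz; have Hq := walk_tpath Hf.
  have := Hc _ Hq (size_mkseq _ _); rewrite !nth_mkseq //; last exact: r_gt0.
  rewrite -{1}Hz iter_parent_dist => /(_ erefl) /= E.
  have {}E : rdim M z = rdim M (parent z).
    apply: E => i /andP[Hi1 Hi2]; rewrite nth_mkseq; last lia.
    rewrite -(prednK Hi1) iterSr; apply: suppM_iter.
    by apply: leaf_suppM_parent => //; apply/negP.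
  by move: Hs; rewrite rdim_sigma_leaf // E subnn.
split => [|q Ht Hs Hqr _]; first exact: r_gt0.
have Hf : walk (nth (vroot n) q) r by have := tpath_walk Ht; rewrite Hs.
have [E1 _ E3 _] := walk_valley_at Hf (leqnn r) Hqr.
have H0 : dist (nth (vroot n) q 0) = r by have := E1 0%N (leq0n _); rewrite addn0.
rewrite (E3 1%N) ?r_gt0 //=; apply/eqP; rewrite eqn_leq rdim_leaf_le //=.
by rewrite -subn_eq0 -rdim_sigma_leaf // Hleaf.
Qed.


Definition shift_spec (d' : nat) : Prop :=
  [/\ is_diam (sigma b M) d',
      (d <= d' + 2)%N /\ (d' <= d)%N,
      [/\ (d' + 2 = d)%N <-> sink_module (~~ b) (sigma b M),
          sink_module (~~ b) (sigma b M) <-> complete M c r &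
          (d' + 2 = d)%N -> vcenter (sigma b M) c],
      ((d' + 1 = d)%N <-> flow_module (sigma b M)) /\
      ((d' + 1 = d)%N ->
         exists c' : V n,
           ecenter (sigma b M) c c' /\
           exists p : seq (V n),
             [/\ tpath p, size p = r.+1, nth vr p 0 = c,
                 nth vr p 1 = c' & ~~ sinkb (~~ b) (nth vr p r)]) &
      ((d' = d)%N <-> source_module (~~ b) (sigma b M)) /\
      ((d' = d)%N -> vcenter (sigma b M) c)].

Lemma sigma_diam_complete :
  (forall z, dist z = r -> rdim (sigma b M) z = 0%N) ->
  is_diam (sigma b M) (r.-1).*2 /\
  forall q, diam_path (sigma b M) q ->
    [/\ size q = (r.-1).*2.+1, dist (nth vr q 0) = r.-1,
        dist (nth vr q (r.-1).*2) = r.-1 & nth vr q r.-1 = c].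
Proof.
move=> Hleaf; have Hr := r_gt0.
have Hb v : suppSM v -> (dist v <= r.-1)%N.
  move=> Hv; have := suppSM_dist Hv; have [E|] := eqVneq (dist v) r; last lia.
  by move: Hv; rewrite Hleaf.
have [E0 Ed E3 E4] := spine_ends.
have Hend j : dist (spine j) = r.-1 -> (j <= d)%N -> suppSM (spine j).
  by move=> Hj Hjd; apply: source_suppSM; [apply: spine_supp | apply: sourceb_pred].
have Hf : walk (fun i => spine i.+1) (r.-1).*2.
  by split => i Hi; [apply: (proj1 spine_walk) | apply: (proj2 spine_walk)]; lia.
have Hsp : supp_path (sigma b M) (mkseq (fun i => spine i.+1) (r.-1).*2.+1).
  apply: (walk_supp_path Hf); apply: (suppSM_walk Hf).
  - by move=> i Hi; apply: spine_supp; lia.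
  - by apply: Hend; [rewrite (E3 1%N) // dist_parent E0 | lia].
  - rewrite (_ : (r.-1).*2.+1 = d - 1)%N; last lia.
    by apply: Hend; [rewrite (E4 1%N) // dist_parent Ed | lia].
have Hdm : is_diam (sigma b M) (r.-1).*2.
  split; first by exists (mkseq (fun i => spine i.+1) (r.-1).*2.+1); rewrite size_mkseq.
  move=> q Hq; have := @walk_length_le _ c _ _ (supp_path_walk Hq).
  have := Hb _ (supp_path_nth Hq (leq0n _)); have := Hb _ (supp_path_nth Hq (leqnn _)).
  by case: q Hq => //= a q _; lia.
split => // q Hq; have Hs := diam_path_size Hdm Hq.
have Hw := supp_path_walk (proj1 Hq); rewrite Hs /= in Hw.
have B0 := Hb _ (supp_path_nth (proj1 Hq) (leq0n _)).
have BL := Hb _ (supp_path_nth (proj1 Hq) (leqnn _)); rewrite Hs /= in BL.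
have [|Ec Esum _ _] := @walk_through_root _ c _ _ Hw; first lia.
have E0' : dist (nth vr q 0) = r.-1 by lia.
by split => //; [lia | rewrite -E0'].
Qed.

Lemma shift_complete :
  (forall z, dist z = r -> rdim (sigma b M) z = 0%N) -> shift_spec (d - 2).
Proof.
move=> Hleaf; have Hr := r_gt0; have [Hdm Hq] := sigma_diam_complete Hleaf.
have Ed : (d - 2 = (r.-1).*2)%N by lia.
have Hsink' : sink_module (~~ b) (sigma b M).
  move=> q /Hq [Es E0 EL _]; rewrite /pfirst /plast Es /= !sinkb_neg.
  by rewrite !sourceb_pred.
have [[q0 [Hq0 Hs0]] _] := Hdm.
have Hq0d := diam_pathP Hdm Hq0 Hs0.
rewrite Ed; split => //.
- by split; lia.
- split; [by split => _; [exact: Hsink' | lia] | by split => // _; apply/complete_leavesE | ].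
  move=> _ q /Hq [Es _ _ Ec]; rewrite Es /=.
  by rewrite odd_double half_double.
- rewrite (flow_moduleE Hdm) odd_double; split => [|H]; [by split; lia | lia].
- split => [|H]; last lia.
  split => [H|Hsrc]; first lia.
  have /andP[+ _] := Hsrc _ Hq0d; have /andP[-> _] := Hsink' _ Hq0d.
  by [].
Qed.

Lemma sigma_path_le q : supp_path (sigma b M) q -> ((size q).-1 <= d)%N.
Proof.
move=> Hq; have := @walk_length_le _ c _ _ (supp_path_walk Hq).
have := suppSM_dist (supp_path_nth Hq (leq0n _)).
by have := suppSM_dist (supp_path_nth Hq (leqnn _)); lia.
Qed.

Lemma sigma_path_max q : supp_path (sigma b M) q -> (size q).-1 = d ->
  [/\ dist (nth vr q 0) = r, dist (nth vr q d) = r, nth vr q r = c,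
      nth vr q r.-1 = iter r.-1 parent (nth vr q 0) &
      nth vr q r.+1 = iter r.-1 parent (nth vr q d)].
Proof.
move=> Hq Hs; have Hw := supp_path_walk Hq; rewrite Hs in Hw.
have B0 := suppSM_dist (supp_path_nth Hq (leq0n _)).
have BL := suppSM_dist (supp_path_nth Hq (leqnn _)); rewrite Hs in BL.
have [|Ec Esum E3 E4] := @walk_through_root _ c _ _ Hw; first lia.
have E0 : dist (nth vr q 0) = r by lia.
rewrite E0 in Ec E3; split => //; [lia | apply: E3; lia | ].
have -> : r.+1 = (d - r.-1)%N by have := r_gt0; lia.
by apply: E4; lia.
Qed.

Lemma shift_two_branches z0 z1 : dist z0 = r -> suppSM z0 ->
  dist z1 = r -> suppSM z1 -> iter r.-1 parent z0 != iter r.-1 parent z1 ->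
  shift_spec d.
Proof.
move=> Hz0 Hs0 Hz1 Hs1 Hne; have Hr := r_gt0.
have Hj : supp_path (sigma b M) (mkseq (join_path c z0 z1 r r) d.+1).
  by rewrite Hd -addnn; apply: suppSM_join => // _; apply: leaf_suppM_parent.
have Hdm : is_diam (sigma b M) d.
  split; first by exists (mkseq (join_path c z0 z1 r r) d.+1); rewrite size_mkseq.
  by move=> q Hq; have := sigma_path_le Hq; case: q Hq => //= a q _; lia.
have Hjd := diam_pathP Hdm Hj (size_mkseq _ _).
have Hleaves q : diam_path (sigma b M) q ->
    [/\ size q = d.+1, dist (nth vr q 0) = r, dist (nth vr q d) = r & nth vr q r = c].
  move=> Hq; have Hs := diam_path_size Hdm Hq.
  by have [|E0 EL Ec _ _] := sigma_path_max (proj1 Hq); rewrite ?Hs.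
have Hnsink : ~ sink_module (~~ b) (sigma b M).
  move/(_ _ Hjd)/andP => -[]; rewrite /pfirst nth_mkseq //.
  by rewrite sinkb_neg /join_path /= sinkb_leaf.
have Hncomp : ~ complete M c r.
  by move/complete_leavesE/(_ _ Hz0)/eqP; apply/negP.
split => //.
- by split; lia.
- split; [by split => [H|/Hnsink //]; lia | by split => [/Hnsink|/Hncomp] | by lia].
- rewrite (flow_moduleE Hdm) Hd odd_double.
  by split; [split => [H|//]; lia | move=> H; lia].
- split; first split => // _ q /Hleaves [Es E0 EL _].
    by rewrite /pfirst /plast Es /= !sinkb_neg !sinkb_leaf.
  move=> _ q /Hleaves [Es _ _ Ec].
  by rewrite Es /= Hd odd_double half_double.
Qed.

Section OneBranch.
Variable z0 : V n.
Hypotheses (Hz0 : dist z0 = r) (Hs0 : suppSM z0).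
Hypothesis Hbranch :
  forall z, dist z = r -> suppSM z -> iter r.-1 parent z = iter r.-1 parent z0.

Local Notation c' := (iter r.-1 parent z0).

Lemma sigma_path_lt q : supp_path (sigma b M) q -> ((size q).-1 < d)%N.
Proof.
move=> Hq; rewrite ltn_neqAle sigma_path_le // andbT; apply/eqP => Hs.
have [E0 EL _ Er1 Er2] := sigma_path_max Hq Hs.
have := (proj2 (supp_path_walk Hq)) r.-1; rewrite Hs (_ : r.-1.+2 = r.+1).
  rewrite Er1 Er2 !Hbranch ?eqxx //; try by apply: supp_path_nth; rewrite ?Hs.
  by move=> /(_ ltac:(have := r_gt0; lia)).
by have := r_gt0; lia.
Qed.

Lemma ecenter_one_branch : is_diam (sigma b M) d.-1 -> ecenter (sigma b M) c c'.
Proof.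
move=> He q Hq; have Hr := r_gt0; have Hs := diam_path_size He Hq.
have Hw := supp_path_walk (proj1 Hq); rewrite Hs /= in Hw.
have S0 := supp_path_nth (proj1 Hq) (leq0n _).
have SL := supp_path_nth (proj1 Hq) (leqnn _); rewrite Hs /= in SL.
have B0 := suppSM_dist S0; have BL := suppSM_dist SL.
have [|Ec Esum E3 E4] := @walk_through_root _ c _ _ Hw; first lia.
rewrite Hs /= (_ : d.-1 = (r.-1).*2.+1); last lia.
split => /=; first by rewrite odd_double.
rewrite uphalf_double; have [H0|H0] : dist (nth vr q 0) = r \/ dist (nth vr q 0) = r.-1 by lia.
- right; rewrite H0 in Ec E3; rewrite (prednK Hr) Ec E3 ?Hbranch //; lia.
- left; rewrite H0 in Ec; split => //.
  rewrite (_ : r.-1.+1 = d.-1 - r.-1)%N ?E4 ?Hbranch //; lia.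
Qed.

Lemma sigma_diam_one_branch : exists q, [/\ is_diam (sigma b M) d.-1,
  diam_path (sigma b M) q, sinkb b (pfirst q) & ~~ sinkb b (plast q)].
Proof.
have Hr := r_gt0.
have [u [Hu HuS Hua]] := leaf_avoiding c'.
have Hw : dist (parent u) = r.-1 by rewrite dist_parent Hu.
set q := mkseq (join_path c z0 (parent u) r r.-1) d.-1.+1.
have Hj : supp_path (sigma b M) q.
  rewrite /q (_ : d.-1 = r + r.-1)%N; last lia.
  apply: suppSM_join => //.
  - move=> _ Hr1; rewrite eq_sym -iterSr (prednK Hr1); exact: Hua.
  - by move=> _; apply: leaf_suppM_parent.
  - by move=> _; do 2 apply: suppM_parent.
  - by apply: source_suppSM; [apply: suppM_parent | apply: sourceb_pred].
have Hdm : is_diam (sigma b M) d.-1.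
  split; first by exists q; rewrite size_mkseq.
  by move=> q' Hq'; have := sigma_path_lt Hq'; case: q' Hq' => //= a q' _; lia.
exists q; split => //; first exact: diam_pathP (size_mkseq _ _).
  by rewrite /pfirst nth_mkseq // /join_path /= sinkb_leaf.
rewrite /plast size_mkseq nth_mkseq //= /join_path; case: ifP => H.
  have -> : d.-1 = dist z0 by lia.
  by rewrite iter_parent_dist sourceb_pred // dist_root; lia.
have -> : (r + r.-1 - d.-1 = 0)%N by lia.
by rewrite /= sourceb_pred.
Qed.

Lemma shift_one_branch : shift_spec d.-1.
Proof.
have Hr := r_gt0.
have [q [Hdm Hq Hq0 HqL]] := sigma_diam_one_branch.
have Hnsink : ~ sink_module (~~ b) (sigma b M).
  by move/(_ _ Hq)/andP => -[]; rewrite sinkb_neg Hq0.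
have Hnsrc : ~ source_module (~~ b) (sigma b M).
  by move/(_ _ Hq)/andP => -[_]; rewrite sinkb_neg negbK (negbTE HqL).
have Hncomp : ~ complete M c r.
  by move/complete_leavesE/(_ _ Hz0)/eqP; apply/negP.
have Hodd : odd d.-1 by rewrite (_ : d.-1 = (r.-1).*2.+1) /= ?odd_double //; lia.
split => //.
- by split; lia.
- split; [by split => [H|/Hnsink //]; lia | by split => [/Hnsink|/Hncomp] | by lia].
- rewrite (flow_moduleE Hdm) Hodd; split; first by split => // _; lia.
  move=> _; exists c'; split; first exact: ecenter_one_branch.
  have [Hg Hgs Hg0 Hg1 Hgr] := geodesic_tpath Hz0 Hr.
  by eexists; split; [exact: Hg | exact: Hgs | exact: Hg0 | exact: Hg1 | ];
    rewrite Hgr sinkb_neg negbK sinkb_leaf.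
- by split; [split => [H|/Hnsrc //]; lia | move=> H; lia].
Qed.

End OneBranch.
End SinkModule.

Theorem mainTheorem7 (K : fieldType) (n : nat) (b : bool) (M : rep K n)
    (c : V n) (d r : nat) :
  (3 <= n)%N ->
  fin_supp M ->
  indecomposable b M ->
  regular b M ->
  is_diam M d -> sink_module b M -> vcenter M c -> d./2 = r ->
  exists d' : nat,
    [/\ is_diam (sigma b M) d',
        (d <= d' + 2)%N /\ (d' <= d)%N,
        [/\ (d' + 2 = d)%N <-> sink_module (~~ b) (sigma b M),
            sink_module (~~ b) (sigma b M) <-> complete M c r &
            (d' + 2 = d)%N -> vcenter (sigma b M) c],
        ((d' + 1 = d)%N <-> flow_module (sigma b M)) /\
        ((d' + 1 = d)%N ->
           exists c' : V n,
             ecenter (sigma b M) c c' /\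
             exists p : seq (V n),
               [/\ tpath p, size p = r.+1, nth (vroot n) p 0 = c,
                   nth (vroot n) p 1 = c' & ~~ sinkb (~~ b) (nth (vroot n) p r)]) &
        ((d' = d)%N <-> source_module (~~ b) (sigma b M)) /\
        ((d' = d)%N -> vcenter (sigma b M) c)].
Proof.
move=> _ _ Hind Hreg Hdiam Hsink Hcen Hr.
have Hnz := (Hreg 1%N).1.
have [[p [Hp Hps]] _] := Hdiam.
have [] := Hcen p (diam_pathP Hdiam Hp Hps); rewrite Hps /= => Hodd Hc.
have Hd : d = r.*2 by rewrite -Hr -{1}(odd_double_half d) (negbTE Hodd).
have Hpc : nth (vroot n) p r = c by rewrite -Hr.
have shift_complete := shift_complete Hind Hnz Hdiam Hsink Hp Hps Hd Hpc.
have shift_two_branches := shift_two_branches Hind Hnz Hdiam Hsink Hp Hps Hd Hpc.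
have shift_one_branch := shift_one_branch Hind Hnz Hdiam Hsink Hp Hps Hd Hpc.
case: (classic (exists z, dist c z = r /\ rdim (sigma b M) z != 0%N)) => [[z0 [Hz0 Hs0]]|Hleaf].
  case: (classic (exists z, [/\ dist c z = r, rdim (sigma b M) z != 0%N &
                              iter r.-1 (parent c) z0 != iter r.-1 (parent c) z])).
    by case=> z1 [Hz1 Hs1 Hne]; exists d; apply: shift_two_branches Hne.
  move=> Hone; exists d.-1; apply: shift_one_branch Hz0 Hs0 _ => z Hz Hs.
  by apply/eqP/negbNE/negP => Hne; apply: Hone; exists z; split; rewrite // eq_sym.
exists (d - 2)%N; apply: shift_complete => z Hz.
by apply/eqP/negbNE/negP => Hs; apply: Hleaf; exists z.
Qed.
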